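(* Let $(\mathcal{F},\nu):(\mathcal{K},c)\to\mathcal{K}'$ be a bilax functor and $b:A\to A$ a $c$-bimonad in $\mathcal{K}$ with structure $(\mu,\eta,\Delta,\varepsilon)$. Equip $\mathcal{F}(b)$ with the monad structure $\mu^{\mathcal{F}}=\mathcal{F}(\mu)\cdot\mathcal{F}^2_{b,b}$, $\eta^{\mathcal{F}}=\mathcal{F}(\eta)\cdot\mathcal{F}^0_A$ and comonad structure $\Delta^{\mathcal{F}}=\mathcal{F}_{2;b,b}\cdot\mathcal{F}(\Delta)$, $\varepsilon^{\mathcal{F}}=\mathcal{F}_{0;A}\cdot\mathcal{F}(\varepsilon)$. Then $\mathcal{F}(b)$ is a $\nu$-bimonad in $\mathcal{K}'$: it satisfies $(\mu^{\mathcal{F}}\circ\mu^{\mathcal{F}})\cdot(1\circ\nu_{b,b}\circ1)\cdot(\Delta^{\mathcal{F}}\circ\Delta^{\mathcal{F}})=\Delta^{\mathcal{F}}\cdot\mu^{\mathcal{F}}$, $\varepsilon^{\mathcal{F}}\circ\varepsilon^{\mathcal{F}}=\varepsilon^{\mathcal{F}}\cdot\mu^{\mathcal{F}}$, $\eta^{\mathcal{F}}\circ\eta^{\mathcal{F}}=\Delta^{\mathcal{F}}\cdot\eta^{\mathcal{F}}$ and $\varepsilon^{\mathcal{F}}\cdot\eta^{\mathcal{F}}=1$. Moreover, $\nu_{b,b}$ is a distributive law on both the left and the right with respect to both the monad and the comonad structure of $\mathcal{F}(b)$ (so $\mathcal{F}(b)$ is a $\tau$-bimonad with $\tau=\nu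_{b,b}$).
   Context: Conventions: in a 2-category, $\circ$ is horizontal composition, $\cdot$ vertical composition ($\beta\cdot\alpha$: first $\alpha$), $1$ identity 2-cells; a 1-endocell is a 1-cell $A\to A$. A Yang–Baxter operator $c$ of $\mathcal{K}$: 2-cells $c_{g,f}:g\circ f\Rightarrow f\circ g$ for 1-endocells of a common object, natural, satisfying the Yang–Baxter equation $(c_{g,f}\circ1)\cdot(1\circ c_{h,f})\cdot(c_{h,g}\circ1)=(1\circ c_{h,g})\cdot(c_{h,f}\circ1)\cdot(1\circ c_{g,f})$ and $c_{\mathrm{id},f}=c_{f,\mathrm{id}}=1$. A $c$-bimonad is a 1-endocell $b$ with monad $(\mu,\eta)$ and comonad $(\Delta,\varepsilon)$ such that $\tau=c_{b,b}$ satisfies $\tau\cdot(\mu\circ1)=(1\circ\mu)\cdot(\tau\circ1)\cdot(1\circ\tau)$, $\tau\cdot(\eta\circ1)=1\circ\eta$, $\tau\cdot(1\circ\mu)=(\mu\circ1)\cdot(1\circ\tau)\cdot(\tau\circ1)$, $\tau\cdot(1\circ\eta)=\eta\circ1$, $(\Delta\circ1)\cdot\tau=(1\circ\tau)\cdot(\tau\circ1)\cdot(1\circ\Delta)$, $(\varepsilon\circ1)\cdot\tau=1\circ\varepsilon$, $(1\circ\Delta)\cdot\tau=(\tau\circ1)\cdot(1\circ\tau)\cdot(\Delta\circ1)$, $(1\circ\varepsilon)\cdot\tau=\varepsilon\circ1$ (these eight say $\tau$ is a left and right distributive law for the monad and for the comonad), and $(\mu\circ\mu)\cdot(1\circ\tau\circ1)\cdot(\Delta\circ\Delta)=\Delta\cdot\mu$,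 $\varepsilon\circ\varepsilon=\varepsilon\cdot\mu$, $\eta\circ\eta=\Delta\cdot\eta$, $\varepsilon\cdot\eta=1$. A bilax functor $(\mathcal{F},\nu):(\mathcal{K},c)\to\mathcal{K}'$ is a functor with lax structure $\mathcal{F}^2_{g,f}:\mathcal{F}(g)\circ\mathcal{F}(f)\Rightarrow\mathcal{F}(gf)$, $\mathcal{F}^0_A:\mathrm{id}\Rightarrow\mathcal{F}(\mathrm{id}_A)$, colax structure $\mathcal{F}_{2;g,f}:\mathcal{F}(gf)\Rightarrow\mathcal{F}(g)\circ\mathcal{F}(f)$, $\mathcal{F}_{0;A}:\mathcal{F}(\mathrm{id}_A)\Rightarrow\mathrm{id}$, and natural 2-cells $\nu_{g,f}:\mathcal{F}(g)\circ\mathcal{F}(f)\Rightarrow\mathcal{F}(f)\circ\mathcal{F}(g)$ for 1-endocells $f,g$ of a common object satisfying: the Yang–Baxter equation; $(1\circ\mathcal{F}_0)\cdot\nu_{\mathrm{id},f}\cdot(\mathcal{F}^0\circ1)=1=(\mathcal{F}_0\circ1)\cdot\nu_{f,\mathrm{id}}\cdot(1\circ\mathcal{F}^0)$; $\nu_{hg,f}\cdot(\mathcal{F}^2_{h,g}\circ1)=(1\circ\mathcal{F}^2_{h,g})\cdot(\nu_{h,f}\circ1)\cdot(1\circ\nu_{g,f})$; $\nu_{\mathrm{id},f}\cdot(\mathcal{F}^0\circ1)=1\circ\mathcal{F}^0$; $\nu_{h,gf}\cdot(1\circ\mathcal{F}^2_{g,f})=(\mathcal{F}^2_{g,f}\circ1)\cdot(1\circ\nu_{h,f})\cdot(\nu_{h,g}\circ1)$;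 $\nu_{f,\mathrm{id}}\cdot(1\circ\mathcal{F}^0)=\mathcal{F}^0\circ1$; $(\mathcal{F}_{2;h,g}\circ1)\cdot\nu_{f,hg}=(1\circ\nu_{f,g})\cdot(\nu_{f,h}\circ1)\cdot(1\circ\mathcal{F}_{2;h,g})$; $(\mathcal{F}_0\circ1)\cdot\nu_{f,\mathrm{id}}=1\circ\mathcal{F}_0$; $(1\circ\mathcal{F}_{2;g,f})\cdot\nu_{gf,h}=(\nu_{g,h}\circ1)\cdot(1\circ\nu_{f,h})\cdot(\mathcal{F}_{2;g,f}\circ1)$; $(1\circ\mathcal{F}_0)\cdot\nu_{\mathrm{id},f}=\mathcal{F}_0\circ1$; and for $A\xrightarrow{k}B\xrightarrow{h}B\xrightarrow{f}B\xrightarrow{g}C$: $(\mathcal{F}^2_{g,h}\circ\mathcal{F}^2_{f,k})\cdot(1\circ\nu_{f,h}\circ1)\cdot(\mathcal{F}_{2;g,f}\circ\mathcal{F}_{2;h,k})=\mathcal{F}_{2;gh,fk}\cdot\mathcal{F}(1_g\circ c_{f,h}\circ1_k)\cdot\mathcal{F}^2_{gf,hk}$, $\mathcal{F}^0\circ\mathcal{F}^0=\mathcal{F}_{2;\mathrm{id},\mathrm{id}}\cdot\mathcal{F}^0$, $\mathcal{F}_0\circ\mathcal{F}_0=\mathcal{F}_0\cdot\mathcal{F}^2_{\mathrm{id},\mathrm{id}}$, $\mathcal{F}_0\cdot\mathcal{F}^0=1$. *)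

Set Implicit Arguments.
Unset Strict Implicit.

Record Cat2 := {
  ob : Type;
  hom : ob -> ob -> Type;
  id1 : forall A, hom A A;
  comp1 : forall A B C, hom B C -> hom A B -> hom A C;
  cell : forall A B, hom A B -> hom A B -> Type;
  id2 : forall A B (f : hom A B), cell f f;
  vcomp : forall A B (f g h : hom A B), cell g h -> cell f g -> cell f h;
  hcomp : forall A B C (g g' : hom B C) (f f' : hom A B),
      cell g g' -> cell f f' -> cell (comp1 g f) (comp1 g' f');
  comp1A : forall A B C D (h : hom C D) (g : hom B C) (f : hom A B),
      comp1 (comp1 h g) f = comp1 h (comp1 g f);
  comp1_idl : forall A B (f : hom A B), comp1 (id1 B) f = f;
  comp1_idr : forall A B (f : hom A B), comp1 f (id1 A) = f
}.

Arguments hom {c}.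
Arguments id1 {c} A.
Arguments comp1 {c A B C}.
Arguments cell {c A B}.
Arguments id2 {c A B}.
Arguments vcomp {c A B f g h}.
Arguments hcomp {c A B C g g' f f'}.
Arguments comp1A {c A B C D}.
Arguments comp1_idl {c A B}.
Arguments comp1_idr {c A B}.

Notation "g ∘ f" := (comp1 g f) (at level 40, left associativity).
Notation "β ⊚ α" := (hcomp β α) (at level 40, left associativity).
Notation "β · α" := (vcomp β α) (at level 45, left associativity).  (* vertical: first α *)

(** Identity 2-cells between (propositionally) equal 1-cells; in a strict
    2-category these are the identity 2-cells used to rebracket composites. *)
Definition ecell (K : Cat2) (A B : ob K) (f g : hom A B) (e : f = g) : cell f g :=
  match e in _ = y return cell f y with eq_refl => id2 f end.
Arguments ecell {K A B f g}.

Section Coh.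
Variable K : Cat2.
Definition asc (A B C D : ob K) (h : hom C D) (g : hom B C) (f : hom A B)
  : cell ((h ∘ g) ∘ f) (h ∘ (g ∘ f)) := ecell (comp1A h g f).
Definition asc_inv (A B C D : ob K) (h : hom C D) (g : hom B C) (f : hom A B)
  : cell (h ∘ (g ∘ f)) ((h ∘ g) ∘ f) := ecell (eq_sym (comp1A h g f)).
Definition lu (A B : ob K) (f : hom A B) : cell (id1 B ∘ f) f := ecell (comp1_idl f).
Definition lu_inv (A B : ob K) (f : hom A B) : cell f (id1 B ∘ f) :=
  ecell (eq_sym (comp1_idl f)).
Definition ru (A B : ob K) (f : hom A B) : cell (f ∘ id1 A) f := ecell (comp1_idr f).
Definition ru_inv (A B : ob K) (f : hom A B) : cell f (f ∘ id1 A) :=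
  ecell (eq_sym (comp1_idr f)).

(** "1_x o sigma o 1_w" : (x y)(z w) => (x z')(y' w) for sigma : y z => z' y'. *)
Definition midw (A B C : ob K) (x : hom B C) (y z y' z' : hom B B) (w : hom A B)
  (s : cell (y ∘ z) (z' ∘ y')) : cell ((x ∘ y) ∘ (z ∘ w)) ((x ∘ z') ∘ (y' ∘ w)) :=
  asc_inv x z' (y' ∘ w) · (id2 x ⊚ asc z' y' w) · (id2 x ⊚ (s ⊚ id2 w))
  · (id2 x ⊚ asc_inv y z w) · asc x y (z ∘ w).

(** Axioms of a strict 2-category (hom-collections of 1-cells are sets). *)
Definition is_2cat : Prop :=
  (forall (A B : ob K) (f g : hom A B) (p q : f = g), p = q) /\
  (forall (A B : ob K) (f g h k : hom A B) (γ : cell h k) (β : cell g h) (α : cell f g),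
      γ · (β · α) = (γ · β) · α) /\
  (forall (A B : ob K) (f g : hom A B) (α : cell f g), id2 g · α = α) /\
  (forall (A B : ob K) (f g : hom A B) (α : cell f g), α · id2 f = α) /\
  (forall (A B C : ob K) (g g' g'' : hom B C) (f f' f'' : hom A B)
      (β : cell g g') (β' : cell g' g'') (α : cell f f') (α' : cell f' f''),
      (β' · β) ⊚ (α' · α) = (β' ⊚ α') · (β ⊚ α)) /\
  (forall (A B C : ob K) (g : hom B C) (f : hom A B), id2 g ⊚ id2 f = id2 (g ∘ f)) /\
  (forall (A B C D : ob K) (h h' : hom C D) (g g' : hom B C) (f f' : hom A B)
      (γ : cell h h') (β : cell g g') (α : cell f f'),
      (γ ⊚ β) ⊚ α = asc_inv h' g' f' · (γ ⊚ (β ⊚ α)) · asc h g f) /\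
  (forall (A B : ob K) (f f' : hom A B) (α : cell f f'),
      id2 (id1 B) ⊚ α = lu_inv f' · α · lu f) /\
  (forall (A B : ob K) (f f' : hom A B) (α : cell f f'),
      α ⊚ id2 (id1 A) = ru_inv f' · α · ru f).

Definition YB_family (A : ob K) (X : Type) (P : X -> hom A A)
  (x : forall g f : X, cell (P g ∘ P f) (P f ∘ P g)) : Prop :=
  forall h g f : X,
    (x g f ⊚ id2 (P h)) · asc_inv (P g) (P f) (P h) · (id2 (P g) ⊚ x h f)
      · asc (P g) (P h) (P f) · (x h g ⊚ id2 (P f))
    = asc_inv (P f) (P g) (P h) · (id2 (P f) ⊚ x h g) · asc (P f) (P h) (P g)
      · (x h f ⊚ id2 (P g)) · asc_inv (P h) (P f) (P g) · (id2 (P h) ⊚ x g f)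
      · asc (P h) (P g) (P f).

Definition is_YB_operator (c : forall (A : ob K) (g f : hom A A), cell (g ∘ f) (f ∘ g))
  : Prop :=
  (forall (A : ob K) (g g' f f' : hom A A) (β : cell g g') (α : cell f f'),
      c A g' f' · (β ⊚ α) = (α ⊚ β) · c A g f) /\
  (forall A : ob K, YB_family (P := fun f : hom A A => f) (c A)) /\
  (forall (A : ob K) (f : hom A A), c A (id1 A) f = ru_inv f · lu f) /\
  (forall (A : ob K) (f : hom A A), c A f (id1 A) = lu_inv f · ru f).

Section Bimonad.
Variables (A : ob K) (b : hom A A).

Definition is_monad (mu : cell (b ∘ b) b) (eta : cell (id1 A) b) : Prop :=
  mu · (mu ⊚ id2 b) = mu · (id2 b ⊚ mu) · asc b b b /\
  mu · (eta ⊚ id2 b) = lu b /\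
  mu · (id2 b ⊚ eta) = ru b.

Definition is_comonad (Delta : cell b (b ∘ b)) (eps : cell b (id1 A)) : Prop :=
  (Delta ⊚ id2 b) · Delta = asc_inv b b b · (id2 b ⊚ Delta) · Delta /\
  (eps ⊚ id2 b) · Delta = lu_inv b /\
  (id2 b ⊚ eps) · Delta = ru_inv b.

Definition is_distributive (mu : cell (b ∘ b) b) (eta : cell (id1 A) b)
  (Delta : cell b (b ∘ b)) (eps : cell b (id1 A)) (tau : cell (b ∘ b) (b ∘ b)) : Prop :=
  tau · (mu ⊚ id2 b) = (id2 b ⊚ mu) · asc b b b · (tau ⊚ id2 b) · asc_inv b b b
                        · (id2 b ⊚ tau) · asc b b b /\
  tau · (eta ⊚ id2 b) = (id2 b ⊚ eta) · ru_inv b · lu b /\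
  tau · (id2 b ⊚ mu) = (mu ⊚ id2 b) · asc_inv b b b · (id2 b ⊚ tau) · asc b b b
                        · (tau ⊚ id2 b) · asc_inv b b b /\
  tau · (id2 b ⊚ eta) = (eta ⊚ id2 b) · lu_inv b · ru b /\
  (Delta ⊚ id2 b) · tau = asc_inv b b b · (id2 b ⊚ tau) · asc b b b · (tau ⊚ id2 b)
                          · asc_inv b b b · (id2 b ⊚ Delta) /\
  (eps ⊚ id2 b) · tau = lu_inv b · ru b · (id2 b ⊚ eps) /\
  (id2 b ⊚ Delta) · tau = asc b b b · (tau ⊚ id2 b) · asc_inv b b b · (id2 b ⊚ tau)
                          · asc b b b · (Delta ⊚ id2 b) /\
  (id2 b ⊚ eps) · tau = ru_inv b · lu b · (eps ⊚ id2 b).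

Definition is_tau_bimonad (mu : cell (b ∘ b) b) (eta : cell (id1 A) b)
  (Delta : cell b (b ∘ b)) (eps : cell b (id1 A)) (tau : cell (b ∘ b) (b ∘ b)) : Prop :=
  is_monad mu eta /\ is_comonad Delta eps /\
  is_distributive mu eta Delta eps tau /\
  (mu ⊚ mu) · midw b b tau · (Delta ⊚ Delta) = Delta · mu /\
  lu (id1 A) · (eps ⊚ eps) = eps · mu /\
  (eta ⊚ eta) · lu_inv (id1 A) = Delta · eta /\
  eps · eta = id2 (id1 A).
End Bimonad.

Definition is_c_bimonad (c : forall (A : ob K) (g f : hom A A), cell (g ∘ f) (f ∘ g))
  (A : ob K) (b : hom A A) (mu : cell (b ∘ b) b) (eta : cell (id1 A) b)
  (Delta : cell b (b ∘ b)) (eps : cell b (id1 A)) : Prop :=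
  is_tau_bimonad mu eta Delta eps (c A b b).
End Coh.

Arguments asc {K A B C D}.
Arguments asc_inv {K A B C D}.
Arguments lu {K A B}.
Arguments lu_inv {K A B}.
Arguments ru {K A B}.
Arguments ru_inv {K A B}.
Arguments midw {K A B C x y z y' z' w}.
Arguments YB_family {K A X}.
Arguments is_YB_operator {K}.
Arguments is_monad {K A b}.
Arguments is_comonad {K A b}.
Arguments is_distributive {K A b}.
Arguments is_tau_bimonad {K A b}.
Arguments is_c_bimonad {K} c {A b}.

Record bilax_data (K K' : Cat2) := {
  Fob : ob K -> ob K';
  F1 : forall A B : ob K, hom A B -> hom (Fob A) (Fob B);
  Fcell : forall (A B : ob K) (f g : hom A B), cell f g -> cell (F1 f) (F1 g);
  Fl2 : forall (A B C : ob K) (g : hom B C) (f : hom A B),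
      cell (F1 g ∘ F1 f) (F1 (g ∘ f));
  Fl0 : forall A : ob K, cell (id1 (Fob A)) (F1 (id1 A));
  Fc2 : forall (A B C : ob K) (g : hom B C) (f : hom A B),
      cell (F1 (g ∘ f)) (F1 g ∘ F1 f);
  Fc0 : forall A : ob K, cell (F1 (id1 A)) (id1 (Fob A));
  Fnu : forall (A : ob K) (g f : hom A A), cell (F1 g ∘ F1 f) (F1 f ∘ F1 g)
}.
Arguments Fob {K K'} b.
Arguments F1 {K K'} b {A B}.
Arguments Fcell {K K'} b {A B f g}.
Arguments Fl2 {K K'} b {A B C}.
Arguments Fl0 {K K'} b A.
Arguments Fc2 {K K'} b {A B C}.
Arguments Fc0 {K K'} b A.
Arguments Fnu {K K'} b {A}.

Section Bilax.
Variables (K K' : Cat2) (c : forall (A : ob K) (g f : hom A A), cell (g ∘ f) (f ∘ g))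
  (F : bilax_data K K').
Local Notation FF := (F1 F).
Local Notation F2 := (Fcell F).

Definition is_local_functor : Prop :=
  (forall (A B : ob K) (f g h : hom A B) (β : cell g h) (α : cell f g),
      F2 (β · α) = F2 β · F2 α) /\
  (forall (A B : ob K) (f : hom A B), F2 (id2 f) = id2 (FF f)).

Definition is_lax : Prop :=
  (forall (A B C : ob K) (g g' : hom B C) (f f' : hom A B) (β : cell g g') (α : cell f f'),
      Fl2 F g' f' · (F2 β ⊚ F2 α) = F2 (β ⊚ α) · Fl2 F g f) /\
  (forall (A B C D : ob K) (h : hom C D) (g : hom B C) (f : hom A B),
      Fl2 F (h ∘ g) f · (Fl2 F h g ⊚ id2 (FF f))
      = F2 (asc_inv h g f) · Fl2 F h (g ∘ f) · (id2 (FF h) ⊚ Fl2 F g f)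
        · asc (FF h) (FF g) (FF f)) /\
  (forall (A B : ob K) (f : hom A B),
      Fl2 F (id1 B) f · (Fl0 F B ⊚ id2 (FF f)) = F2 (lu_inv f) · lu (FF f)) /\
  (forall (A B : ob K) (f : hom A B),
      Fl2 F f (id1 A) · (id2 (FF f) ⊚ Fl0 F A) = F2 (ru_inv f) · ru (FF f)).

Definition is_colax : Prop :=
  (forall (A B C : ob K) (g g' : hom B C) (f f' : hom A B) (β : cell g g') (α : cell f f'),
      Fc2 F g' f' · F2 (β ⊚ α) = (F2 β ⊚ F2 α) · Fc2 F g f) /\
  (forall (A B C D : ob K) (h : hom C D) (g : hom B C) (f : hom A B),
      (Fc2 F h g ⊚ id2 (FF f)) · Fc2 F (h ∘ g) f
      = asc_inv (FF h) (FF g) (FF f) · (id2 (FF h) ⊚ Fc2 F g f) · Fc2 F h (g ∘ f)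
        · F2 (asc h g f)) /\
  (forall (A B : ob K) (f : hom A B),
      (Fc0 F B ⊚ id2 (FF f)) · Fc2 F (id1 B) f = lu_inv (FF f) · F2 (lu f)) /\
  (forall (A B : ob K) (f : hom A B),
      (id2 (FF f) ⊚ Fc0 F A) · Fc2 F f (id1 A) = ru_inv (FF f) · F2 (ru f)).

Definition is_bilax_nu : Prop :=
  (forall (A : ob K) (g g' f f' : hom A A) (β : cell g g') (α : cell f f'),
      Fnu F g' f' · (F2 β ⊚ F2 α) = (F2 α ⊚ F2 β) · Fnu F g f) /\
  (forall A : ob K, @YB_family K' (Fob F A) (hom A A) (fun f : hom A A => FF f) (@Fnu _ _ F A)) /\
  (forall (A : ob K) (f : hom A A),
      (id2 (FF f) ⊚ Fc0 F A) · Fnu F (id1 A) f · (Fl0 F A ⊚ id2 (FF f))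
      = ru_inv (FF f) · lu (FF f)) /\
  (forall (A : ob K) (f : hom A A),
      (Fc0 F A ⊚ id2 (FF f)) · Fnu F f (id1 A) · (id2 (FF f) ⊚ Fl0 F A)
      = lu_inv (FF f) · ru (FF f)) /\
  (forall (A : ob K) (h g f : hom A A),
      Fnu F (h ∘ g) f · (Fl2 F h g ⊚ id2 (FF f))
      = (id2 (FF f) ⊚ Fl2 F h g) · asc (FF f) (FF h) (FF g) · (Fnu F h f ⊚ id2 (FF g))
        · asc_inv (FF h) (FF f) (FF g) · (id2 (FF h) ⊚ Fnu F g f) · asc (FF h) (FF g) (FF f)) /\
  (forall (A : ob K) (f : hom A A),
      Fnu F (id1 A) f · (Fl0 F A ⊚ id2 (FF f))
      = (id2 (FF f) ⊚ Fl0 F A) · ru_inv (FF f) · lu (FF f)) /\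
  (forall (A : ob K) (h g f : hom A A),
      Fnu F h (g ∘ f) · (id2 (FF h) ⊚ Fl2 F g f)
      = (Fl2 F g f ⊚ id2 (FF h)) · asc_inv (FF g) (FF f) (FF h) · (id2 (FF g) ⊚ Fnu F h f)
        · asc (FF g) (FF h) (FF f) · (Fnu F h g ⊚ id2 (FF f)) · asc_inv (FF h) (FF g) (FF f)) /\
  (forall (A : ob K) (f : hom A A),
      Fnu F f (id1 A) · (id2 (FF f) ⊚ Fl0 F A)
      = (Fl0 F A ⊚ id2 (FF f)) · lu_inv (FF f) · ru (FF f)) /\
  (forall (A : ob K) (h g f : hom A A),
      (Fc2 F h g ⊚ id2 (FF f)) · Fnu F f (h ∘ g)
      = asc_inv (FF h) (FF g) (FF f) · (id2 (FF h) ⊚ Fnu F f g) · asc (FF h) (FF f) (FF g)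
        · (Fnu F f h ⊚ id2 (FF g)) · asc_inv (FF f) (FF h) (FF g) · (id2 (FF f) ⊚ Fc2 F h g)) /\
  (forall (A : ob K) (f : hom A A),
      (Fc0 F A ⊚ id2 (FF f)) · Fnu F f (id1 A)
      = lu_inv (FF f) · ru (FF f) · (id2 (FF f) ⊚ Fc0 F A)) /\
  (forall (A : ob K) (h g f : hom A A),
      (id2 (FF h) ⊚ Fc2 F g f) · Fnu F (g ∘ f) h
      = asc (FF h) (FF g) (FF f) · (Fnu F g h ⊚ id2 (FF f)) · asc_inv (FF g) (FF h) (FF f)
        · (id2 (FF g) ⊚ Fnu F f h) · asc (FF g) (FF f) (FF h) · (Fc2 F g f ⊚ id2 (FF h))) /\
  (forall (A : ob K) (f : hom A A),
      (id2 (FF f) ⊚ Fc0 F A) · Fnu F (id1 A) f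
      = ru_inv (FF f) · lu (FF f) · (Fc0 F A ⊚ id2 (FF f))) /\
  (forall (A B C : ob K) (k : hom A B) (h f : hom B B) (g : hom B C),
      (Fl2 F g h ⊚ Fl2 F f k) · midw (Fnu F f h) · (Fc2 F g f ⊚ Fc2 F h k)
      = Fc2 F (g ∘ h) (f ∘ k) · F2 (midw (x := g) (w := k) (@c B f h)) · Fl2 F (g ∘ f) (h ∘ k)) /\
  (forall A : ob K,
      (Fl0 F A ⊚ Fl0 F A) · lu_inv (id1 (Fob F A))
      = Fc2 F (id1 A) (id1 A) · F2 (lu_inv (id1 A)) · Fl0 F A) /\
  (forall A : ob K,
      lu (id1 (Fob F A)) · (Fc0 F A ⊚ Fc0 F A)
      = Fc0 F A · F2 (lu (id1 A)) · Fl2 F (id1 A) (id1 A)) /\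
  (forall A : ob K, Fc0 F A · Fl0 F A = id2 (id1 (Fob F A))).

Definition is_bilax : Prop := is_local_functor /\ is_lax /\ is_colax /\ is_bilax_nu.
End Bilax.

Arguments is_bilax {K K'} c F.

(* Every structure equation for F(b) is the image under F of the corresponding
   equation for b: naturality moves the structure cells F^2, F^0, F_2, F_0 and nu
   past F(mu), F(eta), F(Delta), F(eps), and the coherence axioms of F then match
   the two sides.  Distributivity of nu_{b,b} follows from the compatibility of nu
   with the lax and colax structure alone; the bimonad law uses the compatibility
   of F^2 and F_2 with c and nu. *)
Set Implicit Arguments.
Unset Strict Implicit.

Section TwoCategory.
Variable C : Cat2.
Hypothesis HC : is_2cat C.

Lemma vcompA (A B : ob C) (f g h k : hom A B) (γ : cell h k) (β : cell g h) (α : cell f g) :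
  γ · (β · α) = (γ · β) · α.
Proof. destruct HC as (_ & H & _); apply H. Qed.

Lemma vcomp1l (A B : ob C) (f g : hom A B) (α : cell f g) : id2 g · α = α.
Proof. destruct HC as (_ & _ & H & _); apply H. Qed.

Lemma vcomp1r (A B : ob C) (f g : hom A B) (α : cell f g) : α · id2 f = α.
Proof. destruct HC as (_ & _ & _ & H & _); apply H. Qed.

Lemma interchange (A B D : ob C) (g g' g'' : hom B D) (f f' f'' : hom A B)
  (β : cell g g') (β' : cell g' g'') (α : cell f f') (α' : cell f' f'') :
  (β' · β) ⊚ (α' · α) = (β' ⊚ α') · (β ⊚ α).
Proof. destruct HC as (_ & _ & _ & _ & H & _); apply H. Qed.

Lemma whiskerr_vcomp (A B D : ob C) (g g' g'' : hom B D) (f : hom A B)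
  (β : cell g g') (β' : cell g' g'') :
  (β' · β) ⊚ id2 f = (β' ⊚ id2 f) · (β ⊚ id2 f).
Proof. rewrite <- interchange, vcomp1l; reflexivity. Qed.

Lemma whiskerl_vcomp (A B D : ob C) (g : hom B D) (f f' f'' : hom A B)
  (α : cell f f') (α' : cell f' f'') :
  id2 g ⊚ (α' · α) = (id2 g ⊚ α') · (id2 g ⊚ α).
Proof. rewrite <- interchange, vcomp1l; reflexivity. Qed.

Lemma ecellK (A B : ob C) (f g : hom A B) (e1 : f = g) (e2 : g = f) :
  ecell e2 · ecell e1 = id2 f.
Proof.
  destruct e1; simpl; rewrite vcomp1r.
  destruct HC as [UIP _]; rewrite (UIP _ _ _ _ e2 eq_refl); reflexivity.
Qed.

Lemma vcomp1r_inj (A B : ob C) (f g : hom A B) (α β : cell f g) :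
  α · id2 f = β · id2 f -> α = β.
Proof. rewrite !vcomp1r; trivial. Qed.

Lemma vcomp2_rw (A B : ob C) (g h k : hom A B) (X : cell h k) (Y : cell g h) (Z : cell g k) :
  X · Y = Z -> forall (e : hom A B) (r : cell e g), X · (Y · r) = Z · r.
Proof. intros E e r; rewrite vcompA, E; reflexivity. Qed.

Lemma vcomp3_rw (A B : ob C) (g h k l : hom A B)
  (X : cell k l) (Y : cell h k) (Z : cell g h) (W : cell g l) :
  X · Y · Z = W -> forall (e : hom A B) (r : cell e g), X · (Y · (Z · r)) = W · r.
Proof. intros E e r; rewrite !vcompA, E; reflexivity. Qed.
End TwoCategory.

Section Transport.
Variables (K K' : Cat2) (c : forall (A : ob K) (g f : hom A A), cell (g ∘ f) (f ∘ g))
  (F : bilax_data K K').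
Hypotheses (HK : is_2cat K) (HK' : is_2cat K') (HFfun : is_local_functor F)
  (HFlax : is_lax F) (HFcolax : is_colax F) (HFnu : is_bilax_nu c F).

Local Notation FF := (F1 F).
Local Notation F2 := (Fcell F).

(* Composites are kept right-associated and, after [vcomp1r_inj], end in an
   identity, so any two consecutive factors [X · Y] occur as [X · (Y · r)]. *)
Local Ltac rassoc := rewrite <- ?(vcompA HK').
Local Ltac vrewrite E := rewrite (vcomp2_rw HK' E); rassoc.

Lemma Fcell_vcomp_rw (A B : ob K) (f g h : hom A B) (β : cell g h) (α : cell f g)
  (e : hom (Fob F A) (Fob F B)) (r : cell e (FF f)) :
  F2 β · (F2 α · r) = F2 (β · α) · r.
Proof. destruct HFfun as [Hcomp _]; rewrite Hcomp; apply (vcompA HK'). Qed.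

Lemma Fcell_id2 (A B : ob K) (f : hom A B) : F2 (id2 f) = id2 (FF f).
Proof. destruct HFfun as [_ Hid]; apply Hid. Qed.

Lemma Fl2_natural (A B C : ob K) (g g' : hom B C) (f f' : hom A B)
  (β : cell g g') (α : cell f f') :
  Fl2 F g' f' · (F2 β ⊚ F2 α) = F2 (β ⊚ α) · Fl2 F g f.
Proof. destruct HFlax as [H _]; apply H. Qed.

Lemma Fl2_whiskerl (A B C : ob K) (g : hom B C) (f f' : hom A B) (α : cell f f') :
  Fl2 F g f' · (id2 (FF g) ⊚ F2 α) = F2 (id2 g ⊚ α) · Fl2 F g f.
Proof. rewrite <- Fcell_id2; apply Fl2_natural. Qed.

Lemma Fl2_whiskerr (A B C : ob K) (g g' : hom B C) (f : hom A B) (β : cell g g') :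
  Fl2 F g' f · (F2 β ⊚ id2 (FF f)) = F2 (β ⊚ id2 f) · Fl2 F g f.
Proof. rewrite <- Fcell_id2; apply Fl2_natural. Qed.

Lemma Fc2_natural (A B C : ob K) (g g' : hom B C) (f f' : hom A B)
  (β : cell g g') (α : cell f f') :
  (F2 β ⊚ F2 α) · Fc2 F g f = Fc2 F g' f' · F2 (β ⊚ α).
Proof. destruct HFcolax as [H _]; symmetry; apply H. Qed.

Lemma Fc2_whiskerl (A B C : ob K) (g : hom B C) (f f' : hom A B) (α : cell f f') :
  (id2 (FF g) ⊚ F2 α) · Fc2 F g f = Fc2 F g f' · F2 (id2 g ⊚ α).
Proof. rewrite <- Fcell_id2; apply Fc2_natural. Qed.

Lemma Fc2_whiskerr (A B C : ob K) (g g' : hom B C) (f : hom A B) (β : cell g g') :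
  (F2 β ⊚ id2 (FF f)) · Fc2 F g f = Fc2 F g' f · F2 (β ⊚ id2 f).
Proof. rewrite <- Fcell_id2; apply Fc2_natural. Qed.

Lemma Fnu_whiskerl (A : ob K) (g f f' : hom A A) (α : cell f f') :
  Fnu F g f' · (id2 (FF g) ⊚ F2 α) = (F2 α ⊚ id2 (FF g)) · Fnu F g f.
Proof. destruct HFnu as [H _]; rewrite <- Fcell_id2; apply H. Qed.

Lemma Fnu_whiskerr (A : ob K) (g g' f : hom A A) (β : cell g g') :
  Fnu F g' f · (F2 β ⊚ id2 (FF f)) = (id2 (FF f) ⊚ F2 β) · Fnu F g f.
Proof. destruct HFnu as [H _]; rewrite <- Fcell_id2; apply H. Qed.

Variables (A : ob K) (b : hom A A) (mu : cell (b ∘ b) b) (eta : cell (id1 A) b)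
  (Delta : cell b (b ∘ b)) (eps : cell b (id1 A)).

Local Notation muF := (F2 mu · Fl2 F b b).
Local Notation etaF := (F2 eta · Fl0 F A).
Local Notation DeltaF := (Fc2 F b b · F2 Delta).
Local Notation epsF := (Fc0 F A · F2 eps).

Lemma lax_monad : is_monad mu eta -> is_monad muF etaF.
Proof.
  destruct HFlax as (_ & Hassoc & Hlunit & Hrunit).
  intros (Hmu & Hetal & Hetar); split; [|split];
    apply (vcomp1r_inj HK'); rewrite ?(whiskerr_vcomp HK'), ?(whiskerl_vcomp HK'); rassoc.
  - vrewrite (Fl2_whiskerr b mu); vrewrite (Hassoc _ _ _ _ b b b).
    vrewrite (Fl2_whiskerl b mu); rewrite !Fcell_vcomp_rw.
    assert (Hmu' : mu · (mu ⊚ id2 b) · asc_inv b b b = mu · (id2 b ⊚ mu)).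
    { rewrite Hmu, <- !(vcompA HK); unfold asc, asc_inv.
      rewrite (ecellK HK), (vcomp1r HK); reflexivity. }
    rewrite Hmu'; reflexivity.
  - vrewrite (Fl2_whiskerr b eta); vrewrite (Hlunit _ _ b); rewrite !Fcell_vcomp_rw.
    rewrite Hetal; unfold lu, lu_inv; rewrite (ecellK HK), Fcell_id2, (vcomp1l HK').
    reflexivity.
  - vrewrite (Fl2_whiskerl b eta); vrewrite (Hrunit _ _ b); rewrite !Fcell_vcomp_rw.
    rewrite Hetar; unfold ru, ru_inv; rewrite (ecellK HK), Fcell_id2, (vcomp1l HK').
    reflexivity.
Qed.

Lemma colax_comonad : is_comonad Delta eps -> is_comonad DeltaF epsF.
Proof.
  destruct HFcolax as (_ & Hassoc & Hlunit & Hrunit).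
  intros (HDelta & Hepsl & Hepsr); split; [|split];
    apply (vcomp1r_inj HK'); rewrite ?(whiskerr_vcomp HK'), ?(whiskerl_vcomp HK'); rassoc.
  - vrewrite (Fc2_whiskerr b Delta); vrewrite (Hassoc _ _ _ _ b b b).
    vrewrite (Fc2_whiskerl b Delta); rewrite !Fcell_vcomp_rw.
    assert (HDelta' : asc b b b · (Delta ⊚ id2 b) · Delta = (id2 b ⊚ Delta) · Delta).
    { rewrite <- (vcompA HK), HDelta, !(vcompA HK); unfold asc, asc_inv.
      rewrite (ecellK HK), (vcomp1l HK); reflexivity. }
    rewrite HDelta'; reflexivity.
  - vrewrite (Fc2_whiskerr b eps); vrewrite (Hlunit _ _ b); rewrite !Fcell_vcomp_rw.
    rewrite <- (vcompA HK), Hepsl; unfold lu, lu_inv.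
    rewrite (ecellK HK), Fcell_id2, (vcomp1l HK'); reflexivity.
  - vrewrite (Fc2_whiskerl b eps); vrewrite (Hrunit _ _ b); rewrite !Fcell_vcomp_rw.
    rewrite <- (vcompA HK), Hepsr; unfold ru, ru_inv.
    rewrite (ecellK HK), Fcell_id2, (vcomp1l HK'); reflexivity.
Qed.

Lemma bilax_distributive : is_distributive muF etaF DeltaF epsF (Fnu F b b).
Proof.
  destruct HFnu as (_ & _ & _ & _ & Hmull & Hunitl & Hmulr & Hunitr
                    & Hcomull & Hcounitl & Hcomulr & Hcounitr & _).
  repeat apply conj;
    apply (vcomp1r_inj HK'); rewrite ?(whiskerr_vcomp HK'), ?(whiskerl_vcomp HK'); rassoc.
  - vrewrite (Fnu_whiskerr b mu); vrewrite (Hmull _ b b b); reflexivity.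
  - vrewrite (Fnu_whiskerr b eta); vrewrite (Hunitl _ b); reflexivity.
  - vrewrite (Fnu_whiskerl b mu); vrewrite (Hmulr _ b b b); reflexivity.
  - vrewrite (Fnu_whiskerl b eta); vrewrite (Hunitr _ b); reflexivity.
  - vrewrite (eq_sym (Fnu_whiskerl b Delta)); vrewrite (Hcomull _ b b b); reflexivity.
  - vrewrite (eq_sym (Fnu_whiskerl b eps)); vrewrite (Hcounitl _ b); reflexivity.
  - vrewrite (eq_sym (Fnu_whiskerr b Delta)); vrewrite (Hcomulr _ b b b); reflexivity.
  - vrewrite (eq_sym (Fnu_whiskerr b eps)); vrewrite (Hcounitr _ b); reflexivity.
Qed.

Lemma bilax_comult_mult :
  (mu ⊚ mu) · midw (c b b) · (Delta ⊚ Delta) = Delta · mu ->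
  (muF ⊚ muF) · midw (Fnu F b b) · (DeltaF ⊚ DeltaF) = DeltaF · muF.
Proof.
  destruct HFnu as (_ & _ & _ & _ & _ & _ & _ & _ & _ & _ & _ & _ & Hcompat & _).
  intros Hbimonad; apply (vcomp1r_inj HK'); rewrite !(interchange HK'); rassoc.
  rewrite (vcomp3_rw HK' (Hcompat A A A b b b b)); rassoc.
  vrewrite (Fc2_natural mu mu); vrewrite (Fl2_natural Delta Delta).
  rewrite !Fcell_vcomp_rw, Hbimonad; reflexivity.
Qed.

Lemma bilax_counit_mult :
  lu (id1 A) · (eps ⊚ eps) = eps · mu -> lu (id1 (Fob F A)) · (epsF ⊚ epsF) = epsF · muF.
Proof.
  destruct HFnu as (_ & _ & _ & _ & _ & _ & _ & _ & _ & _ & _ & _ & _ & _ & Hcounit & _).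
  intros Hbimonad; apply (vcomp1r_inj HK'); rewrite !(interchange HK'); rassoc.
  vrewrite (Hcounit A); vrewrite (Fl2_natural eps eps).
  rewrite !Fcell_vcomp_rw, Hbimonad; reflexivity.
Qed.

Lemma bilax_comult_unit :
  (eta ⊚ eta) · lu_inv (id1 A) = Delta · eta ->
  (etaF ⊚ etaF) · lu_inv (id1 (Fob F A)) = DeltaF · etaF.
Proof.
  destruct HFnu as (_ & _ & _ & _ & _ & _ & _ & _ & _ & _ & _ & _ & _ & Hunit & _).
  intros Hbimonad; apply (vcomp1r_inj HK'); rewrite !(interchange HK'); rassoc.
  vrewrite (Hunit A); vrewrite (Fc2_natural eta eta).
  rewrite !Fcell_vcomp_rw, Hbimonad; reflexivity.
Qed.

Lemma bilax_counit_unit : eps · eta = id2 (id1 A) -> epsF · etaF = id2 (id1 (Fob F A)).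
Proof.
  destruct HFnu as (_ & _ & _ & _ & _ & _ & _ & _ & _ & _ & _ & _ & _ & _ & _ & Hcounit_unit).
  intros Hbimonad; rassoc.
  rewrite Fcell_vcomp_rw, Hbimonad, Fcell_id2, (vcomp1l HK'); apply Hcounit_unit.
Qed.
End Transport.

Theorem proposition4p9 (K K' : Cat2) (HK : is_2cat K) (HK' : is_2cat K')
  (c : forall (A : ob K) (g f : hom A A), cell (g ∘ f) (f ∘ g))
  (Hc : is_YB_operator c)
  (F : bilax_data K K') (HF : is_bilax c F)
  (A : ob K) (b : hom A A)
  (mu : cell (b ∘ b) b) (eta : cell (id1 A) b)
  (Delta : cell b (b ∘ b)) (eps : cell b (id1 A))
  (Hb : is_c_bimonad c mu eta Delta eps) :
  is_tau_bimonad
    (Fcell F mu · Fl2 F b b)          (* mu^F    *)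
    (Fcell F eta · Fl0 F A)           (* eta^F   *)
    (Fc2 F b b · Fcell F Delta)       (* Delta^F *)
    (Fc0 F A · Fcell F eps)           (* eps^F   *)
    (Fnu F b b).
Proof.
  destruct HF as (HFfun & HFlax & HFcolax & HFnu).
  destruct Hb as (Hmonad & Hcomonad & _ & Hmult & Hcounit & Hunit & Hcounit_unit).
  refine (conj _ (conj _ (conj _ (conj _ (conj _ (conj _ _)))))).
  - exact (lax_monad HK HK' HFfun HFlax Hmonad).
  - exact (colax_comonad HK HK' HFfun HFcolax Hcomonad).
  - exact (bilax_distributive HK' HFfun HFnu mu eta Delta eps).
  - exact (bilax_comult_mult HK' HFfun HFlax HFcolax HFnu Hmult).
  - exact (bilax_counit_mult HK' HFfun HFlax HFnu Hcounit).
  - exact (bilax_comult_unit HK' HFfun HFcolax HFnu Hunit).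
  - exact (bilax_counit_unit HK' HFfun HFnu Hcounit_unit).
Qed.
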